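(* Let $X$ take values in $\{x_1,\dots,x_K\}$ and $Y$ in $\{y_1,\dots,y_K\}$ with a fixed joint distribution $p(X,Y)$, and let $Y_N\in\{1,\dots,N\}$ be a quantization of $Y$ given by a conditional probability $q_{\nu k}=q(Y_N=\nu\mid Y=y_k)$, $q\in\Delta$. Fix $I_0>0$. Then any solution $q^*$ of the problem $$\max_{q\in\Delta} -I(Y;Y_N)\quad\text{subject to}\quad I(X;Y_N)\ge I_0,$$ and any solution $q^*$ of the problem $$\max_{q\in\Delta} H(Y_N\mid Y)\quad\text{subject to}\quad I(X;Y_N)\ge I_0,$$ satisfies the constraint with equality: $I(X;Y_N)=I_0$ at $q=q^*$.
   Context: $\Delta$ is the set of all $q=(q_{\nu k})_{\nu\le N,\,k\le K}$ with $q_{\nu k}\ge 0$ and $\sum_{\nu=1}^N q_{\nu k}=1$ for each $k$. The quantizer induces the joint distributions $p(Y_N=\nu, Y=y_k)=q_{\nu k}p(y_k)$ and $p(X=x, Y_N=\nu)=\sum_k q_{\nu k}p(x,y_k)$ (i.e. $X\to Y\to Y_N$ is Markov). $I(\cdot;\cdot)$ denotes mutual information and $H(Y_N\mid Y)=-\sum_k p(y_k)\sum_\nu q_{\nu k}\log q_{\nu k}$ the conditional entropy; all are regarded as functions of $q$. *)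

From mathcomp Require Import all_boot all_order all_algebra.
From mathcomp Require Import reals exp.
Set Implicit Arguments. Unset Strict Implicit. Unset Printing Implicit Defensive.
Import Order.TTheory GRing.Theory Num.Theory.
Local Open Scope ring_scope.

Section Defs.
Variable R : realType.

Definition xlnx (x : R) : R := if x == 0 then 0 else x * ln x.

Definition mutinf (A B : nat) (J : 'I_A -> 'I_B -> R) : R :=
  \sum_(a < A) \sum_(b < B)
     (if J a b == 0 then 0
      else J a b * ln (J a b / ((\sum_(b' < B) J a b') * (\sum_(a' < A) J a' b)))).

(* fixed joint distribution p(X = x_i, Y = y_k) = p i k *)
Definition is_joint_distr (K : nat) (p : 'I_K -> 'I_K -> R) : Prop :=
  (forall i k, 0 <= p i k) /\ \sum_(i < K) \sum_(k < K) p i k = 1.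

Definition pY (K : nat) (p : 'I_K -> 'I_K -> R) (k : 'I_K) : R :=
  \sum_(i < K) p i k.

Definition Delta (N K : nat) (q : 'I_N -> 'I_K -> R) : Prop :=
  (forall nu k, 0 <= q nu k) /\ (forall k, \sum_(nu < N) q nu k = 1).

Definition pXYN (N K : nat) (p : 'I_K -> 'I_K -> R) (q : 'I_N -> 'I_K -> R)
  (i : 'I_K) (nu : 'I_N) : R := \sum_(k < K) q nu k * p i k.

Definition pYYN (N K : nat) (p : 'I_K -> 'I_K -> R) (q : 'I_N -> 'I_K -> R)
  (k : 'I_K) (nu : 'I_N) : R := q nu k * pY p k.

Definition I_XYN N K p q : R := mutinf (@pXYN N K p q).
Definition I_YYN N K p q : R := mutinf (@pYYN N K p q).
Definition H_YN_Y (N K : nat) (p : 'I_K -> 'I_K -> R) (q : 'I_N -> 'I_K -> R) : R :=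
  - \sum_(k < K) pY p k * \sum_(nu < N) xlnx (q nu k).

End Defs.

From mathcomp Require Import all_boot all_order all_algebra.
From mathcomp Require Import boolp reals exp.
From mathcomp Require Import ring lra.
Set Implicit Arguments. Unset Strict Implicit. Unset Printing Implicit Defensive.

(* Suppose I(X;Y_N) > I0 at an optimum q*, and move q* towards the uniform
   quantizer u (u_{nu k} = 1/N) along q_t = (1 - t) q* + t u.  Both objectives,
   -I(Y;Y_N) and H(Y_N|Y), are concave in q and strictly larger at u than at q*:
   I(Y;Y_N) vanishes at u and H(Y_N|Y) equals ln N there, while equality at q*
   would force Y_N to be independent of Y, hence I(X;Y_N) = 0 < I0.  So the
   objective strictly increases for every t > 0.  On the other hand I(X;Y_N) is
   lower semicontinuous along the segment (x ln x lies above its tangents, and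
   |t ln t| is at most a multiple of sqrt t), so q_t remains feasible for small t,
   contradicting the optimality of q*. *)
Import Order.TTheory GRing.Theory Num.Theory.
Local Open Scope ring_scope.

Section XLnX.
Variable R : realType.
Implicit Types x y z s t : R.

Lemma ln_lt_subr1 z : 0 < z -> z != 1 -> ln z < z - 1.
Proof.
move=> z0 z1; have := expR_gt1Dx (_ : ln z != 0).
by rewrite lnK ?posrE // ln_eq0 // z1 => /(_ isT); rewrite ltrBrDl.
Qed.

Lemma xlnxE x : xlnx x = x * ln x.
Proof. by rewrite /xlnx; case: eqP => [->|]; rewrite ?mul0r. Qed.

Lemma xlnx0 : xlnx 0 = 0 :> R.
Proof. by rewrite xlnxE mul0r. Qed.

Lemma xlnxM x y : 0 <= x -> 0 <= y -> xlnx (x * y) = x * xlnx y + y * xlnx x.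
Proof.
rewrite !le0r => /predU1P[->|x0]; first by rewrite !mul0r xlnx0 mulr0 addr0.
move=> /predU1P[->|y0]; first by rewrite mulr0 xlnx0 mulr0 mul0r addr0.
by rewrite !xlnxE lnM ?posrE //; ring.
Qed.

Lemma xlnx_tangent_lt x y : 0 < x -> 0 <= y -> y != x ->
  xlnx x + (1 + ln x) * (y - x) < xlnx y.
Proof.
move=> x0; rewrite !xlnxE le0r => /predU1P[->|y0] yx.
  by rewrite mul0r; lra.
have xy1 : x / y != 1 by apply: contra yx => /eqP/divr1_eq->.
have := ln_lt_subr1 (divr_gt0 x0 y0) xy1.
rewrite ln_div ?posrE // => h.
have : y * (ln x - ln y) < y * (x / y - 1) by rewrite ltr_pM2l.
rewrite !mulrBr mulr1 [y * (x / y)]mulrC divfK ?gt_eqF //; lra.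
Qed.

Lemma xlnx_tangent_le x y : 0 < x -> 0 <= y ->
  xlnx x + (1 + ln x) * (y - x) <= xlnx y.
Proof.
move=> x0 y0; have [->|yx] := eqVneq y x; first by rewrite subrr mulr0 addr0.
exact/ltW/xlnx_tangent_lt.
Qed.

Lemma xlnx_tangent_eq x y : 0 < x -> 0 <= y ->
  xlnx y <= xlnx x + (1 + ln x) * (y - x) -> y = x.
Proof.
move=> x0 y0; apply: contraTeq => yx; rewrite -ltNge.
exact: xlnx_tangent_lt.
Qed.

Lemma convex_xlnx t x y : 0 <= t <= 1 -> 0 <= x -> 0 <= y ->
  xlnx ((1 - t) * x + t * y) <= (1 - t) * xlnx x + t * xlnx y.
Proof.
move=> /andP[t0 t1] x0 y0; set m := (1 - t) * x + t * y.
have tx0 : 0 <= (1 - t) * x by rewrite mulr_ge0 ?subr_ge0.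
have ty0 : 0 <= t * y by rewrite mulr_ge0.
have : 0 <= m by rewrite addr_ge0.
rewrite le0r => /predU1P[m0|m0].
  have [hx hy] : (1 - t) * x = 0 /\ t * y = 0 by move: m0; rewrite /m; lra.
  by rewrite m0 !xlnxE !mulrA hx hy !mul0r addr0.
have tx := xlnx_tangent_le m0 x0; have ty := xlnx_tangent_le m0 y0.
have -> : xlnx m = (1 - t) * (xlnx m + (1 + ln m) * (x - m))
                   + t * (xlnx m + (1 + ln m) * (y - m)) by rewrite /m; ring.
by apply: lerD; apply: ler_wpM2l; lra.
Qed.

Lemma xlnx_ge_subr1 z : 0 <= z -> z - 1 <= xlnx z.
Proof.
by move=> /(xlnx_tangent_le ltr01); rewrite xlnxE ln1 mulr0 add0r addr0 mul1r.
Qed.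

Lemma xlnx_le_subr1_eq z : 0 <= z -> xlnx z <= z - 1 -> z = 1.
Proof.
by move=> /(xlnx_tangent_eq ltr01); rewrite (xlnxE 1) ln1 mulr0 add0r addr0 mul1r.
Qed.

(* At x = 0 there is no tangent; instead
   xlnx (s^2 y) = s^2 xlnx y + 2 s y xlnx s >= - s (2 y + 1). *)
Lemma xlnx_mix_ge x y s : 0 <= x -> 0 <= y -> 0 < s <= 1 ->
  xlnx x - s * (`|1 + ln x| * `|y - x| + 2 * y + 1)
    <= xlnx ((1 - s ^+ 2) * x + s ^+ 2 * y).
Proof.
move=> + y0 /andP[s0 s1]; have s0' := ltW s0.
rewrite le0r => /predU1P[->|x0].
  rewrite mulr0 add0r xlnx0 xlnxM ?exprn_ge0 // expr2 xlnxM //.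
  have hy : s * s * (y - 1) <= s * s * xlnx y.
    by rewrite ler_wpM2l ?mulr_ge0 ?xlnx_ge_subr1.
  have hs : y * s * (s - 1) <= y * s * xlnx s.
    by rewrite ler_wpM2l ?mulr_ge0 ?xlnx_ge_subr1.
  have hn : 0 <= s * (`|1 + ln 0| * `|y - 0|) by rewrite !mulr_ge0.
  have hss : s * s <= s by rewrite ger_pMr.
  have hys : 0 <= y * s * s by rewrite !mulr_ge0.
  nra.
have ss1 : s ^+ 2 <= 1 by rewrite expr_le1.
have z0 : 0 <= (1 - s ^+ 2) * x + s ^+ 2 * y.
  by rewrite addr_ge0 // mulr_ge0 ?exprn_ge0 ?subr_ge0 // ltW.
apply: le_trans (xlnx_tangent_le x0 z0).
have -> : (1 - s ^+ 2) * x + s ^+ 2 * y - x = s ^+ 2 * (y - x) by ring.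
have hn := lerNnormlW (lexx `|(1 + ln x) * (y - x)|); rewrite normrM in hn.
have hss : s ^+ 2 <= s by rewrite expr2 ger_pMr.
have hn0 : 0 <= `|1 + ln x| * `|y - x| by rewrite mulr_ge0.
have := ler_wpM2r hn0 hss.
nra.
Qed.

Lemma sum_xlnx_mix_le (I : finType) (v v' : I -> R) s :
  (forall i, 0 <= v i) -> (forall i, 0 <= v' i) -> 0 < s <= 1 ->
  \sum_i xlnx ((1 - s ^+ 2) * v i + s ^+ 2 * v' i)
    <= \sum_i xlnx (v i) + s * `|\sum_i xlnx (v' i) - \sum_i xlnx (v i)|.
Proof.
move=> v0 v'0 /andP[s0 s1]; have s0' := ltW s0.
have ss : 0 <= s ^+ 2 <= 1 by rewrite exprn_ge0 // expr_le1.
apply: le_trans (_ : \sum_i ((1 - s ^+ 2) * xlnx (v i) + s ^+ 2 * xlnx (v' i)) <= _).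
  by apply: ler_sum => i _; apply: convex_xlnx.
rewrite big_split /= -!mulr_sumr.
set A := \sum_i xlnx (v i); set B := \sum_i xlnx (v' i).
have hss : s ^+ 2 <= s by rewrite expr2 ger_pMr.
have := ler_norm (B - A); have := normr_ge0 (B - A); nra.
Qed.

Lemma mul_divK x y : (y = 0 -> x = 0) -> y * (x / y) = x.
Proof.
have [->|y0] := eqVneq y 0; first by move=> /(_ erefl) ->; rewrite mul0r.
by rewrite mulrC divfK.
Qed.

Definition xlnxy x y := x * ln (x / y).

(* Also at y = 0, since x / 0 = 0 and ln 0 = 0. *)
Lemma xlnxyE x y : xlnxy x y = y * xlnx (x / y).
Proof.
rewrite /xlnxy xlnxE; have [->|y0] := eqVneq y 0.
  by rewrite invr0 mulr0 !mul0r ln0 ?mulr0.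
by rewrite mulrA mulrCA divff // mulr1.
Qed.

(* The hypotheses [y = 0 -> x = 0] exclude the points where the junk value
   [xlnxy x 0 = 0] stands for +oo. *)
Lemma convex_xlnxy t x y x' y' : 0 <= t <= 1 ->
  0 <= x -> 0 <= y -> (y = 0 -> x = 0) ->
  0 <= x' -> 0 <= y' -> (y' = 0 -> x' = 0) ->
  xlnxy ((1 - t) * x + t * x') ((1 - t) * y + t * y')
    <= (1 - t) * xlnxy x y + t * xlnxy x' y'.
Proof.
move=> /andP[t0 t1] x0 y0 yx x'0 y'0 yx'; rewrite !xlnxyE !mulrA.
have ty0 : 0 <= (1 - t) * y by rewrite mulr_ge0 ?subr_ge0.
have ty'0 : 0 <= t * y' by rewrite mulr_ge0.
set Y := (1 - t) * y + t * y'.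
have : 0 <= Y by rewrite addr_ge0.
rewrite le0r => /predU1P[Y0|Y0].
  have [-> ->] : (1 - t) * y = 0 /\ t * y' = 0 by move: Y0; rewrite /Y; lra.
  by rewrite Y0 !mul0r addr0.
set l := t * y' / Y.
have l01 : 0 <= l <= 1.
  rewrite divr_ge0 ?(ltW Y0) //= ler_pdivrMr // mul1r /Y; lra.
have e1 : 1 - l = (1 - t) * y / Y by rewrite /l /Y; field; rewrite gt_eqF.
have eX : ((1 - t) * x + t * x') / Y = (1 - l) * (x / y) + l * (x' / y').
  rewrite e1 /l -{1}(mul_divK yx) -{1}(mul_divK yx').
  by move: (x / y) (x' / y') => a a'; field; rewrite gt_eqF.
have -> : (1 - t) * y * xlnx (x / y) + t * y' * xlnx (x' / y')
    = Y * ((1 - l) * xlnx (x / y) + l * xlnx (x' / y')).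
  by rewrite e1 /l; field; rewrite gt_eqF.
rewrite eX; apply: (ler_wpM2l (ltW Y0)).
exact: convex_xlnx l01 (divr_ge0 x0 y0) (divr_ge0 x'0 y'0).
Qed.

Lemma psumr_le0P (I : finType) (F : I -> R) :
  (forall i, 0 <= F i) -> \sum_i F i <= 0 -> forall i, F i = 0.
Proof.
move=> F0 le0 i; apply: (psumr_eq0P (P := predT)) => //.
by apply/le_anti; rewrite le0 sumr_ge0.
Qed.

End XLnX.

Section MutualInformation.
Variables (R : realType) (A B : nat).
Implicit Types (J : 'I_A -> 'I_B -> R) (t : R).

Definition row_marg J a := \sum_(b < B) J a b.
Definition col_marg J b := \sum_(a < A) J a b.
Definition mix t (J J' : 'I_A -> 'I_B -> R) : 'I_A -> 'I_B -> R :=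
  fun a b => (1 - t) * J a b + t * J' a b.

Lemma mutinfE J :
  mutinf J = \sum_a \sum_b xlnxy (J a b) (row_marg J a * col_marg J b).
Proof.
apply: eq_bigr => a _; apply: eq_bigr => b _.
by case: eqP => [->|]; rewrite /xlnxy ?mul0r.
Qed.

Lemma row_marg_mix t J J' a :
  row_marg (mix t J J') a = (1 - t) * row_marg J a + t * row_marg J' a.
Proof. by rewrite /row_marg big_split -!mulr_sumr. Qed.

Lemma col_marg_mix t J J' b :
  col_marg (mix t J J') b = (1 - t) * col_marg J b + t * col_marg J' b.
Proof. by rewrite /col_marg big_split -!mulr_sumr. Qed.

Lemma mix_ge0 t J J' : 0 <= t <= 1 ->
  (forall a b, 0 <= J a b) -> (forall a b, 0 <= J' a b) ->
  forall a b, 0 <= mix t J J' a b.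
Proof.
by move=> /andP[t0 t1] J0 J'0 a b; rewrite addr_ge0 ?mulr_ge0 ?subr_ge0.
Qed.

Section NonNegative.
Variable J : 'I_A -> 'I_B -> R.
Hypothesis J0 : forall a b, 0 <= J a b.

Lemma row_marg_ge0 a : 0 <= row_marg J a.
Proof. exact: sumr_ge0. Qed.

Lemma col_marg_ge0 b : 0 <= col_marg J b.
Proof. exact: sumr_ge0. Qed.

Lemma marg_gt0 a b : J a b != 0 -> 0 < row_marg J a /\ 0 < col_marg J b.
Proof.
move=> Jab; rewrite !lt0r row_marg_ge0 col_marg_ge0 !andbT; split.
  by apply: contra Jab => /eqP/(psumr_eq0P (P := predT)) -> //.
by apply: contra Jab => /eqP/(psumr_eq0P (P := predT)) -> //.
Qed.

Lemma marg_prod_eq0 a b : row_marg J a * col_marg J b = 0 -> J a b = 0.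
Proof.
apply: contra_eq => /marg_gt0[ra cb]; exact/lt0r_neq0/mulr_gt0.
Qed.

Lemma mutinf_xlnx : mutinf J = \sum_a \sum_b xlnx (J a b)
  - \sum_a xlnx (row_marg J a) - \sum_b xlnx (col_marg J b).
Proof.
rewrite mutinfE.
transitivity (\sum_a \sum_b
  (xlnx (J a b) - J a b * ln (row_marg J a) - J a b * ln (col_marg J b))).
  apply: eq_bigr => a _; apply: eq_bigr => b _.
  have [->|Jab] := eqVneq (J a b) 0; first by rewrite /xlnxy xlnx0 !mul0r !subr0.
  have [ra cb] := marg_gt0 Jab.
  have Jp : 0 < J a b by rewrite lt0r Jab J0.
  by rewrite /xlnxy xlnxE ln_div ?posrE ?mulr_gt0 // lnM ?posrE //; ring.
under eq_bigr do rewrite !sumrB.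
rewrite !sumrB; congr (_ - _ - _).
  by apply: eq_bigr => a _; rewrite -mulr_suml xlnxE.
by rewrite exchange_big; apply: eq_bigr => b _; rewrite -mulr_suml xlnxE.
Qed.

Lemma mutinf_le0_prod : \sum_a \sum_b J a b = 1 -> mutinf J <= 0 ->
  forall a b, J a b = row_marg J a * col_marg J b.
Proof.
move=> J1 le0.
pose P a b := row_marg J a * col_marg J b.
have P0 a b : 0 <= P a b by rewrite mulr_ge0 ?row_marg_ge0 ?col_marg_ge0.
have P1 : \sum_a \sum_b P a b = 1.
  under eq_bigr do rewrite -mulr_sumr.
  rewrite -mulr_suml [X in X * _]J1 mul1r -J1 exchange_big.
  by apply: eq_bigr.
pose G a b := P a b * (xlnx (J a b / P a b) - (J a b / P a b - 1)).
have G0 a b : 0 <= G a b.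
  by rewrite mulr_ge0 // subr_ge0 xlnx_ge_subr1 ?divr_ge0.
have eG : mutinf J = \sum_a \sum_b G a b.
  transitivity (\sum_a \sum_b (xlnxy (J a b) (P a b) - (J a b - P a b))).
    rewrite mutinfE; under [RHS]eq_bigr do rewrite sumrB sumrB.
    by rewrite !sumrB J1 P1 subrr subr0.
  apply: eq_bigr => a _; apply: eq_bigr => b _.
  rewrite xlnxyE /G mulrBr [P a b * (_ - 1)]mulrBr mulr1 mul_divK //.
  exact: marg_prod_eq0.
have rowG a : \sum_b G a b = 0.
  apply: (psumr_le0P (F := fun a => \sum_b G a b)) => [a'|]; first exact: sumr_ge0.
  by rewrite -eG.
have {}G0 a b : G a b = 0 by apply: (psumr_le0P (F := G a)) => //; rewrite rowG.
move=> a b; have [Pab|Pab] := eqVneq (P a b) 0.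
  by rewrite -/(P a b) Pab; apply: marg_prod_eq0.
have Pp : 0 < P a b by rewrite lt0r Pab P0.
apply: divr1_eq; apply: xlnx_le_subr1_eq; first exact: divr_ge0 (J0 a b) (P0 a b).
move/eqP: (G0 a b); rewrite /G mulf_eq0 gt_eqF //= subr_eq0 => /eqP->.
exact: lexx.
Qed.

End NonNegative.

Lemma mutinf_prod J (r : 'I_A -> R) (c : 'I_B -> R) :
  (forall a b, J a b = r a * c b) -> \sum_a r a = 1 -> \sum_b c b = 1 ->
  mutinf J = 0.
Proof.
move=> eJ r1 c1; rewrite mutinfE; apply: big1 => a _; apply: big1 => b _.
have -> : row_marg J a = r a.
  by rewrite /row_marg (eq_bigr _ (fun b _ => eJ a b)) -mulr_sumr c1 mulr1.
have -> : col_marg J b = c b.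
  by rewrite /col_marg (eq_bigr _ (fun a _ => eJ a b)) -mulr_suml r1 mul1r.
rewrite -eJ /xlnxy; have [->|Jab] := eqVneq (J a b) 0; first by rewrite mul0r.
by rewrite divff // ln1 mulr0.
Qed.

Lemma convex_mutinf t J J' : 0 <= t <= 1 ->
  (forall a b, 0 <= J a b) -> (forall a b, 0 <= J' a b) ->
  (forall a, row_marg J a = row_marg J' a) ->
  mutinf (mix t J J') <= (1 - t) * mutinf J + t * mutinf J'.
Proof.
move=> t01 J0 J'0 eJ; rewrite !mutinfE !mulr_sumr -big_split /=.
apply: ler_sum => a _; rewrite !mulr_sumr -big_split /=; apply: ler_sum => b _.
have -> : row_marg (mix t J J') a * col_marg (mix t J J') b
    = (1 - t) * (row_marg J a * col_marg J b) + t * (row_marg J' a * col_marg J' b).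
  by rewrite row_marg_mix col_marg_mix -eJ; ring.
apply: convex_xlnxy => //; rewrite ?mulr_ge0 ?row_marg_ge0 ?col_marg_ge0 //.
  exact: marg_prod_eq0.
exact: marg_prod_eq0.
Qed.

(* Parametrizing by s^2 turns the t ln t modulus of xlnx at 0 into a linear one. *)
Lemma mutinf_mix_ge J J' :
  (forall a b, 0 <= J a b) -> (forall a b, 0 <= J' a b) ->
  exists2 M, 0 <= M & forall s, 0 < s <= 1 ->
    mutinf J - s * M <= mutinf (mix (s ^+ 2) J J').
Proof.
move=> J0 J'0.
pose C (x y : R) := `|1 + ln x| * `|y - x| + 2 * y + 1.
pose dr := \sum_a xlnx (row_marg J' a) - \sum_a xlnx (row_marg J a).
pose dc := \sum_b xlnx (col_marg J' b) - \sum_b xlnx (col_marg J b).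
have C0 a b : 0 <= C (J a b) (J' a b) by rewrite !addr_ge0 ?mulr_ge0.
exists (\sum_a \sum_b C (J a b) (J' a b) + `|dr| + `|dc|).
  by rewrite !addr_ge0 // sumr_ge0 // => a _; exact: sumr_ge0.
move=> s s01; have /andP[s0 s1] := s01; have s0' := ltW s0.
have ss : 0 <= s ^+ 2 <= 1 by rewrite exprn_ge0 // expr_le1.
rewrite !mutinf_xlnx //; last exact: mix_ge0.
have hJ : \sum_a \sum_b xlnx (J a b) - s * \sum_a \sum_b C (J a b) (J' a b)
    <= \sum_a \sum_b xlnx (mix (s ^+ 2) J J' a b).
  rewrite mulr_sumr -sumrB; apply: ler_sum => a _.
  rewrite mulr_sumr -sumrB; apply: ler_sum => b _.
  exact: xlnx_mix_ge.
have hr : \sum_a xlnx (row_marg (mix (s ^+ 2) J J') a)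
    <= \sum_a xlnx (row_marg J a) + s * `|dr|.
  under eq_bigr do rewrite row_marg_mix.
  by apply: sum_xlnx_mix_le => // a; rewrite row_marg_ge0.
have hc : \sum_b xlnx (col_marg (mix (s ^+ 2) J J') b)
    <= \sum_b xlnx (col_marg J b) + s * `|dc|.
  under eq_bigr do rewrite col_marg_mix.
  by apply: sum_xlnx_mix_le => // b; rewrite col_marg_ge0.
rewrite !mulrDr; lra.
Qed.

Lemma mutinf_mix_lsc J J' e :
  (forall a b, 0 <= J a b) -> (forall a b, 0 <= J' a b) -> 0 < e ->
  exists2 t, 0 < t <= 1 & mutinf J - e <= mutinf (mix t J J').
Proof.
move=> J0 J'0 e0; have [M M0 hM] := mutinf_mix_ge J0 J'0.
have Me : 0 < M + e by rewrite ltr_wpDl.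
pose s := e / (M + e).
have s0 : 0 < s by rewrite divr_gt0.
have s1 : s <= 1 by rewrite ler_pdivrMr // mul1r lerDr.
exists (s ^+ 2); first by rewrite exprn_gt0 // expr_le1 // ltW.
apply: le_trans (hM s _); last by rewrite s0 s1.
rewrite lerB // /s mulrAC ler_pdivrMr // ler_pM2l //; lra.
Qed.

End MutualInformation.

Lemma Delta_N_gt0 (R : realType) (K N : nat) (p : 'I_K -> 'I_K -> R)
    (q : 'I_N -> 'I_K -> R) :
  is_joint_distr p -> Delta q -> (0 < N)%N.
Proof.
move=> [_ p1] [_ q1]; case: N q q1 => // q q1.
case: K p p1 q q1 => [|K] p p1 q q1.
  by move: p1; rewrite big_ord0 => /eqP; rewrite eq_sym oner_eq0.
by move: (q1 ord0); rewrite big_ord0 => /eqP; rewrite eq_sym oner_eq0.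
Qed.

Section Quantizer.
Variables (R : realType) (K N : nat) (p : 'I_K -> 'I_K -> R).
Hypothesis p_distr : is_joint_distr p.
Hypothesis N_gt0 : (0 < N)%N.
Implicit Types (q : 'I_N -> 'I_K -> R) (t : R).

Definition unif : 'I_N -> 'I_K -> R := fun _ _ => N%:R^-1.

Let p_ge0 i k : 0 <= p i k. Proof. by case: p_distr. Qed.

Let N_neq0 : N%:R != 0 :> R. Proof. by rewrite pnatr_eq0 -lt0n. Qed.

Lemma sum_unif : \sum_(nu < N) N%:R^-1 = 1 :> R.
Proof. by rewrite sumr_const card_ord -[LHS]mulr_natr mulVf. Qed.

Lemma pY_ge0 k : 0 <= pY p k.
Proof. exact: sumr_ge0. Qed.

Lemma sum_pY : \sum_k pY p k = 1.
Proof. by case: p_distr => _ <-; rewrite exchange_big. Qed.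

Lemma sum_row_marg_p : \sum_i row_marg p i = 1.
Proof. by case: p_distr. Qed.

Lemma Delta_unif : Delta unif.
Proof. by split=> [nu k|k]; rewrite ?sum_unif // invr_ge0 ler0n. Qed.

Lemma Delta_mix t q q' : 0 <= t <= 1 -> Delta q -> Delta q' -> Delta (mix t q q').
Proof.
move=> t01 [q0 q1] [q'0 q'1]; split; first exact: mix_ge0.
by move=> k; rewrite big_split /= -!mulr_sumr q1 q'1 !mulr1 subrK.
Qed.

Lemma pXYN_ge0 q : Delta q -> forall i nu, 0 <= pXYN p q i nu.
Proof. by move=> [q0 _] i nu; apply: sumr_ge0 => k _; rewrite mulr_ge0. Qed.

Lemma pYYN_ge0 q : Delta q -> forall k nu, 0 <= pYYN p q k nu.
Proof. by move=> [q0 _] k nu; rewrite mulr_ge0 ?pY_ge0. Qed.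

Lemma row_marg_pYYN q : Delta q -> forall k, row_marg (pYYN p q) k = pY p k.
Proof. by move=> [_ q1] k; rewrite /row_marg -mulr_suml q1 mul1r. Qed.

Lemma pXYN_mix t q q' : pXYN p (mix t q q') = mix t (pXYN p q) (pXYN p q').
Proof.
apply/funext => i; apply/funext => nu.
rewrite /pXYN /mix; under eq_bigr do rewrite mulrDl -!mulrA.
by rewrite big_split /= -!mulr_sumr.
Qed.

Lemma pYYN_mix t q q' : pYYN p (mix t q q') = mix t (pYYN p q) (pYYN p q').
Proof. by apply/funext => k; apply/funext => nu; rewrite /pYYN /mix; ring. Qed.

Lemma I_XYN_eq0_const q (c : 'I_N -> R) : \sum_nu c nu = 1 ->
  (forall k, pY p k != 0 -> forall nu, q nu k = c nu) -> I_XYN p q = 0.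
Proof.
move=> c1 qc; apply: (mutinf_prod (r := row_marg p) (c := c)) => [i nu||//].
  rewrite /pXYN /row_marg mulr_suml; apply: eq_bigr => k _.
  have [pk0|pk] := eqVneq (pY p k) 0; last by rewrite qc // mulrC.
  by rewrite (psumr_eq0P (P := predT) (fun i _ => p_ge0 i k) pk0) ?mulr0 ?mul0r.
exact: sum_row_marg_p.
Qed.

Lemma I_YYN_unif : I_YYN p unif = 0.
Proof.
apply: (mutinf_prod (r := pY p) (c := fun _ => N%:R^-1)) => [k nu||].
- by rewrite /pYYN mulrC.
- exact: sum_pY.
- exact: sum_unif.
Qed.

Lemma I_YYN_le0_I_XYN_eq0 q : Delta q -> I_YYN p q <= 0 -> I_XYN p q = 0.
Proof.
move=> hq le0; have J1 : \sum_k \sum_nu pYYN p q k nu = 1.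
  by rewrite -sum_pY; apply: eq_bigr => k _; exact: row_marg_pYYN.
have indep := mutinf_le0_prod (pYYN_ge0 hq) J1 le0.
apply: (I_XYN_eq0_const (c := col_marg (pYYN p q))) => [|k pk nu].
  by rewrite /col_marg exchange_big.
apply: (mulIf pk); move: (indep k nu); rewrite row_marg_pYYN // /pYYN => ->.
exact: mulrC.
Qed.

Lemma convex_I_YYN t q q' : 0 <= t <= 1 -> Delta q -> Delta q' ->
  I_YYN p (mix t q q') <= (1 - t) * I_YYN p q + t * I_YYN p q'.
Proof.
move=> t01 hq hq'; rewrite /I_YYN pYYN_mix.
apply: convex_mutinf => //; try exact: pYYN_ge0.
by move=> k; rewrite !row_marg_pYYN.
Qed.

Lemma I_XYN_mix_lsc q q' e : Delta q -> Delta q' -> 0 < e ->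
  exists2 t, 0 < t <= 1 & I_XYN p q - e <= I_XYN p (mix t q q').
Proof.
move=> hq hq' e0; rewrite /I_XYN.
have [t t01 lsc] := mutinf_mix_lsc (pXYN_ge0 hq) (pXYN_ge0 hq') e0.
by exists t; rewrite // pXYN_mix.
Qed.

Lemma concave_H t q q' : 0 <= t <= 1 -> Delta q -> Delta q' ->
  (1 - t) * H_YN_Y p q + t * H_YN_Y p q' <= H_YN_Y p (mix t q q').
Proof.
move=> t01 [q0 _] [q'0 _]; rewrite /H_YN_Y !mulrN -opprD lerN2.
rewrite !mulr_sumr -big_split; apply: ler_sum => k _ /=.
rewrite mulrCA [t * _]mulrCA -mulrDr ler_wpM2l ?pY_ge0 //.
rewrite !mulr_sumr -big_split; apply: ler_sum => nu _ /=.
exact: convex_xlnx.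
Qed.

Section UniformDistribution.
Variable w : 'I_N -> R.
Hypotheses (w_ge0 : forall nu, 0 <= w nu) (w_sum1 : \sum_nu w nu = 1).

Let u_gt0 : 0 < N%:R^-1 :> R. Proof. by rewrite invr_gt0 ltr0n. Qed.

Let sum_tangent_unif :
  \sum_nu (xlnx N%:R^-1 + (1 + ln N%:R^-1) * (w nu - N%:R^-1))
    = \sum_(nu < N) xlnx N%:R^-1.
Proof.
by rewrite big_split /= -mulr_sumr sumrB w_sum1 sum_unif subrr mulr0 addr0.
Qed.

Lemma sum_xlnx_ge_unif : \sum_(nu < N) xlnx N%:R^-1 <= \sum_nu xlnx (w nu).
Proof.
by rewrite -sum_tangent_unif; apply: ler_sum => nu _; exact: xlnx_tangent_le.
Qed.

Lemma sum_xlnx_le_unif_eq :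
  \sum_nu xlnx (w nu) <= \sum_(nu < N) xlnx N%:R^-1 -> forall nu, w nu = N%:R^-1.
Proof.
rewrite -sum_tangent_unif -subr_le0 -sumrB => le0 nu.
apply: xlnx_tangent_eq => //; rewrite -subr_le0 le_eqVlt; apply/orP; left; apply/eqP.
move: nu; apply: psumr_le0P => // nu; rewrite subr_ge0.
exact: xlnx_tangent_le.
Qed.

End UniformDistribution.

Lemma H_ge_unif_I_XYN_eq0 q : Delta q -> H_YN_Y p unif <= H_YN_Y p q -> I_XYN p q = 0.
Proof.
move=> [q0 q1] le_unif.
pose D k := \sum_nu xlnx (q nu k) - \sum_(nu < N) xlnx N%:R^-1.
have D0 k : 0 <= pY p k * D k.
  by rewrite mulr_ge0 ?pY_ge0 // subr_ge0 sum_xlnx_ge_unif.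
have sumD : \sum_k pY p k * D k <= 0.
  rewrite /D; under eq_bigr do rewrite mulrBr.
  by rewrite sumrB subr_le0; move: le_unif; rewrite /H_YN_Y lerN2.
apply: (I_XYN_eq0_const (c := fun _ => N%:R^-1)) => [|k pk]; first exact: sum_unif.
apply: (sum_xlnx_le_unif_eq (w := q ^~ k) (fun nu => q0 nu k) (q1 k)).
move/eqP: (psumr_le0P D0 sumD k); rewrite mulf_eq0 (negbTE pk) /= subr_eq0.
by move/eqP->.
Qed.

Lemma constraint_active (F : ('I_N -> 'I_K -> R) -> R) q1 qs I0 :
  Delta q1 -> Delta qs ->
  (forall t, 0 <= t <= 1 -> (1 - t) * F qs + t * F q1 <= F (mix t qs q1)) ->
  F qs < F q1 -> I0 <= I_XYN p qs ->
  (forall q, Delta q -> I0 <= I_XYN p q -> F q <= F qs) ->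
  I_XYN p qs = I0.
Proof.
move=> hq1 hqs concaveF lt_q1 feas opt.
apply/eqP; rewrite eq_le feas andbT leNgt; apply/negP => slack.
have e0 : 0 < I_XYN p qs - I0 by rewrite subr_gt0.
have [t /andP[t0 t1] lsc] := I_XYN_mix_lsc hqs hq1 e0.
have t01 : 0 <= t <= 1 by rewrite ltW.
have := opt _ (Delta_mix t01 hqs hq1) _; rewrite subKr in lsc => /(_ lsc).
have := concaveF t t01; nra.
Qed.

End Quantizer.

Arguments unif {R K N}.

Theorem mainTheorem1 (R : realType) (K N : nat) (p : 'I_K -> 'I_K -> R) (I0 : R) :
  is_joint_distr p -> 0 < I0 ->
  (forall qs : 'I_N -> 'I_K -> R,
     Delta qs -> I0 <= I_XYN p qs ->
     (forall q : 'I_N -> 'I_K -> R, Delta q -> I0 <= I_XYN p q ->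
        - I_YYN p q <= - I_YYN p qs) ->
     I_XYN p qs = I0) /\
  (forall qs : 'I_N -> 'I_K -> R,
     Delta qs -> I0 <= I_XYN p qs ->
     (forall q : 'I_N -> 'I_K -> R, Delta q -> I0 <= I_XYN p q ->
        H_YN_Y p q <= H_YN_Y p qs) ->
     I_XYN p qs = I0).
Proof.
move=> p_distr I0_gt0; split=> qs hqs feas opt.
all: have N_gt0 := Delta_N_gt0 p_distr hqs.
all: have hu : Delta (@unif R K N) by exact: Delta_unif.
- apply: (constraint_active p_distr (F := fun q => - I_YYN p q) hu hqs) => //.
    move=> t t01; have := convex_I_YYN p_distr t01 hqs hu.
    by rewrite I_YYN_unif //; lra.
  rewrite I_YYN_unif // oppr0 oppr_lt0 ltNge; apply/negP.
  move=> /(I_YYN_le0_I_XYN_eq0 p_distr hqs) I_eq0.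
  by move: feas; rewrite I_eq0; lra.
- apply: (constraint_active p_distr (F := H_YN_Y p) hu hqs) => //.
    by move=> t t01; apply: concave_H.
  rewrite ltNge; apply/negP.
  move=> /(H_ge_unif_I_XYN_eq0 p_distr N_gt0 hqs) I_eq0.
  by move: feas; rewrite I_eq0; lra.
Qed.
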